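(* Let $\pi\in\{2143,1234\}$ and $w\in B_n$. If $w$ contains $\pi$, then there exist indices $-n\leq i_1<i_2<i_3<i_4\leq n$ (all nonzero) at which $w$ forms the pattern $\pi$ and such that there is no $k\in\{1,2,3,4\}$ with $i_k>0$ and $w(i_k)<0$.
   Context: $B_n$ is the group of permutations $w$ of $\{-n,\ldots,-1,1,\ldots,n\}$ with $w(-i)=-w(i)$. Indices $i_1<i_2<i_3<i_4$ form the pattern $1234$ if $w(i_1)<w(i_2)<w(i_3)<w(i_4)$, and form the pattern $2143$ if $w(i_2)<w(i_1)<w(i_4)<w(i_3)$. $w$ contains $\pi$ if some such quadruple of indices forms $\pi$. *)

From HB Require Import structures.
From mathcomp Require Import all_boot all_order all_algebra.
Set Implicit Arguments. Unset Strict Implicit. Unset Printing Implicit Defensive.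
Import Order.TTheory GRing.Theory Num.Theory.
Local Open Scope ring_scope.

Definition bdom (n : nat) (i : int) : bool := (i != 0) && (`|i| <= n%:Z).

(* w : int -> int represents an element of B_n: it permutes {-n..-1,1..n}
   (injective self-map of this finite set) and satisfies w(-i) = -w(i).
   Values of w outside this set are irrelevant. *)
Definition signed_perm (n : nat) (w : int -> int) : Prop :=
  [/\ (forall i, bdom n i -> bdom n (w i)),
      {in bdom n &, injective w} &
      (forall i, bdom n i -> w (- i) = - w i)].

Inductive pat := P1234 | P2143.

Definition forms (w : int -> int) (p : pat) (i1 i2 i3 i4 : int) : bool :=
  match p with
  | P1234 => [&& w i1 < w i2, w i2 < w i3 & w i3 < w i4]
  | P2143 => [&& w i2 < w i1, w i1 < w i4 & w i4 < w i3]
  end.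

Definition occurrence (n : nat) (w : int -> int) (p : pat) (i1 i2 i3 i4 : int) : bool :=
  [&& bdom n i1, bdom n i2, bdom n i3, bdom n i4,
      i1 < i2, i2 < i3, i3 < i4 & forms w p i1 i2 i3 i4].

Definition contains (n : nat) (w : int -> int) (p : pat) : Prop :=
  exists i1 i2 i3 i4, occurrence n w p i1 i2 i3 i4.

(* Call i > 0 with w(i) < 0 a negative entry of w, and i < 0 with w(i) > 0 a
   mirrored one; since w(-i) = -w(i), reflecting an occurrence
   (i1,i2,i3,i4) to (-i4,-i3,-i2,-i1) preserves both patterns and swaps the
   two kinds of entries.  So an occurrence can be repaired unless it has
   entries of both kinds; a mirrored entry i_j and a negative entry i_k then
   form an inversion i_j < 0 < i_k, w(i_j) > 0 > w(i_k).  The pattern 1234 has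
   no inversion, and for 2143 the inversion is {i1,i2} or {i3,i4}; in either
   case one half of the occurrence together with its reflection, e.g.
   (i1,i2,-i2,-i1), is an occurrence without negative entries. *)

From mathcomp Require Import all_boot all_order all_algebra.
From mathcomp Require Import zify.

Set Implicit Arguments.
Unset Strict Implicit.
Unset Printing Implicit Defensive.
Import Order.TTheory GRing.Theory Num.Theory.
Local Open Scope ring_scope.

Definition neg_entry (w : int -> int) (i : int) : bool := (0 < i) && (w i < 0).

Definition mirrored_neg_entry (w : int -> int) (i : int) : bool :=
  (i < 0) && (0 < w i).

Lemma hasNneg_entry (w : int -> int) (s : seq int) :
  ~~ has (neg_entry w) s -> ~ (exists k, k \in s /\ 0 < k /\ w k < 0).
Proof.
move=> /hasPn no_neg [k [ks [k_gt0 wk_lt0]]].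
by have := no_neg k ks; rewrite /neg_entry k_gt0 wk_lt0.
Qed.

Lemma bdomN (n : nat) (i : int) : bdom n (- i) = bdom n i.
Proof. by rewrite /bdom oppr_eq0 normrN. Qed.

Lemma occurrence_neg_entries (n : nat) (w : int -> int) (p : pat) (i1 i2 i3 i4 : int) :
  occurrence n w p i1 i2 i3 i4 ->
  has (neg_entry w) [:: i1; i2; i3; i4] ->
  has (mirrored_neg_entry w) [:: i1; i2; i3; i4] ->
  p = P2143 /\ ((i2 < 0 /\ w i1 < 0) \/ (0 < i3 /\ 0 < w i4)).
Proof.
case/and5P=> _ _ _ _ /and4P[? ? ? forms_p].
move=> /hasP[k + /andP[? ?]] /hasP[j + /andP[? ?]].
rewrite !inE => /or4P[] /eqP ? /or4P[] /eqP ?; subst;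
  by case: p forms_p => /and3P[? ? ?]; [exfalso | split=> //]; lia.
Qed.

Section OddSignedMap.

Variables (n : nat) (w : int -> int).
Hypothesis w_odd : forall i, bdom n i -> w (- i) = - w i.

Lemma occurrence_reflect (p : pat) (i1 i2 i3 i4 : int) :
  occurrence n w p i1 i2 i3 i4 -> occurrence n w p (- i4) (- i3) (- i2) (- i1).
Proof.
case/and5P=> d1 d2 d3 d4 /and4P[? ? ?].
rewrite /occurrence !bdomN d1 d2 d3 d4.
by case: p => /and3P[? ? ?] /=; rewrite !w_odd //;
  apply/and4P; split; try apply/and3P; try split; lia.
Qed.

Lemma has_neg_entry_reflect (i1 i2 i3 i4 : int) :
  all (bdom n) [:: i1; i2; i3; i4] ->
  has (neg_entry w) [:: - i4; - i3; - i2; - i1] =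
  has (mirrored_neg_entry w) [:: i1; i2; i3; i4].
Proof.
case/and5P=> d1 d2 d3 d4 _.
rewrite /= /neg_entry /mirrored_neg_entry !w_odd // !oppr_gt0 !oppr_lt0.
by do 4 case: (_ < 0); do ?case: (0 < _).
Qed.

Lemma occurrence2143_mirror_left (i1 i2 i3 i4 : int) :
  occurrence n w P2143 i1 i2 i3 i4 -> i2 < 0 -> w i1 < 0 ->
  occurrence n w P2143 i1 i2 (- i2) (- i1) &&
  ~~ has (neg_entry w) [:: i1; i2; - i2; - i1].
Proof.
case/and5P=> d1 d2 _ _ /and4P[? _ _ /and3P[? _ _]] ? ?.
rewrite /occurrence /neg_entry /= !bdomN d1 d2 !w_odd //.
apply/andP; split; first (apply/and4P; split; try apply/and3P; try split; lia).
apply/negP; lia.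
Qed.

Lemma occurrence2143_mirror_right (i1 i2 i3 i4 : int) :
  occurrence n w P2143 i1 i2 i3 i4 -> 0 < i3 -> 0 < w i4 ->
  occurrence n w P2143 (- i4) (- i3) i3 i4 &&
  ~~ has (neg_entry w) [:: - i4; - i3; i3; i4].
Proof.
move=> occ i3_gt0 wi4_gt0; have d4 : bdom n i4 by case/and5P: occ.
have := occurrence2143_mirror_left (occurrence_reflect occ).
by rewrite !opprK w_odd // !oppr_lt0; apply.
Qed.

End OddSignedMap.

Theorem lemma2p2 (n : nat) (w : int -> int) (p : pat) :
  signed_perm n w -> contains n w p ->
  exists i1 i2 i3 i4 : int,
    occurrence n w p i1 i2 i3 i4 /\
    ~ (exists k : int, k \in [:: i1; i2; i3; i4] /\ 0 < k /\ w k < 0).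
Proof.
case=> _ _ w_odd [i1 [i2 [i3 [i4 occ]]]].
have in_bdom : all (bdom n) [:: i1; i2; i3; i4].
  by case/and5P: occ => d1 d2 d3 d4 _; apply/and5P.
have [has_neg | no_neg] := boolP (has (neg_entry w) [:: i1; i2; i3; i4]); last first.
  by exists i1, i2, i3, i4; split; last exact: hasNneg_entry no_neg.
have [has_mneg | no_mneg] := boolP (has (mirrored_neg_entry w) [:: i1; i2; i3; i4]); last first.
  exists (- i4), (- i3), (- i2), (- i1); split; first exact: occurrence_reflect.
  by apply: hasNneg_entry; rewrite (has_neg_entry_reflect w_odd in_bdom).
have [p_eq sign_cases] := occurrence_neg_entries occ has_neg has_mneg; subst p.
case: sign_cases => [[i2_lt0 wi1_lt0] | [i3_gt0 wi4_gt0]].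
  have /andP[occ' no_neg'] := occurrence2143_mirror_left w_odd occ i2_lt0 wi1_lt0.
  by exists i1, i2, (- i2), (- i1); split; last exact: hasNneg_entry no_neg'.
have /andP[occ' no_neg'] := occurrence2143_mirror_right w_odd occ i3_gt0 wi4_gt0.
by exists (- i4), (- i3), i3, i4; split; last exact: hasNneg_entry no_neg'.
Qed.
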